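(* Let $X$ be a non-negative absolutely continuous random variable with PDF $f$, let $r>0$ and let $X_{e,r}$ be the escort random variable of order $r$, with PDF $f_{e,r}(x)=\frac{f^r(x)}{\int_0^\infty f^r(t)\,dt}$, $x>0$. Then, for $0<\alpha<\infty$, $\alpha\neq1$, $\beta>0$, with $r\ne1$ and $\alpha r\ne 1$, $$R^\alpha_\beta(X_{e,r})=\frac{1-\alpha r}{(1-\alpha)(1-r)}\cdot\frac{R^{\alpha r}_\beta(X)}{R^r_{\alpha\beta-\alpha+1}(X)}.$$
   Context: For a non-negative absolutely continuous random variable $Z$ with PDF $h$, $0<a<\infty$, $a\ne1$, $b>0$, the Rényi information generating function is $R^a_b(Z)=\frac{1}{1-a}\left(\int_0^\infty h^a(x)\,dx\right)^{b-1}$. All integrals are assumed to exist and be finite (and nonzero where they appear in denominators). *)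

From HB Require Import structures.
From mathcomp Require Import all_boot all_order all_algebra.
From mathcomp Require Import all_classical all_reals all_analysis.
Set Implicit Arguments. Unset Strict Implicit. Unset Printing Implicit Defensive.
Import Order.TTheory GRing.Theory Num.Theory.
Local Open Scope classical_set_scope.
Local Open Scope ring_scope.

Definition pos_half {R : realType} : set R := `[0%R, +oo[%classic.

Definition int0oo {R : realType} (h : R -> R) : R :=
  Rintegral (@lebesgue_measure R) pos_half h.

Definition renyi_igf {R : realType} (h : R -> R) (a b : R) : R :=
  (1 - a)^-1 * (int0oo (fun x => h x `^ a)) `^ (b - 1).

Definition escort {R : realType} (f : R -> R) (r : R) : R -> R :=
  fun x => f x `^ r / int0oo (fun t => f t `^ r).

Definition is_pdf0 {R : realType} (f : R -> R) : Prop :=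
  [/\ measurable_fun pos_half f,
      (forall x, pos_half x -> 0 <= f x) &
      (\int[@lebesgue_measure R]_(x in pos_half) (f x)%:E = 1)%E].

From HB Require Import structures.
From mathcomp Require Import all_boot all_order all_algebra.
From mathcomp Require Import all_classical all_reals all_analysis.
From mathcomp Require Import ring.
Import Order.TTheory GRing.Theory Num.Theory.
Local Open Scope classical_set_scope.
Local Open Scope ring_scope.

(* Write I = \int f^r and J = \int f^(alpha r).  The escort density raised to
   the power alpha is f^(alpha r) I^(-alpha), so \int f_(e,r)^alpha = J I^(-alpha),
   and its (beta - 1)-th power splits as J^(beta - 1) / I^(alpha (beta - 1)).
   The first factor is (1 - alpha r) R^(alpha r)_beta(X); since
   (alpha beta - alpha + 1) - 1 = alpha (beta - 1), the second is
   (1 - r)^-1 / R^r_(alpha beta - alpha + 1)(X).  Only I > 0 and the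
   integrability of f^(alpha r) are needed, not that f is a density. *)

Section EscortRenyi.
Variable R : realType.
Implicit Types (f : R -> R) (a b c r u : R).

Lemma powR_divr u c a : 0 <= u -> 0 <= c -> (u / c) `^ a = u `^ a * c `^ (- a).
Proof.
by move=> u0 c0; rewrite powRM ?invr_ge0 // -powR_inv1 // -powRrM mulN1r.
Qed.

Lemma int0oo_powR_ge0 f r : 0 <= int0oo (fun x => f x `^ r).
Proof. by apply: Rintegral_ge0 => x _; exact: powR_ge0. Qed.

Lemma escort_powR f r a x :
  escort f r x `^ a = f x `^ (a * r) * int0oo (fun t => f t `^ r) `^ (- a).
Proof.
by rewrite /escort powR_divr ?powR_ge0 ?int0oo_powR_ge0 // -powRrM (mulrC r).
Qed.

Lemma int0oo_escort_powR f r a :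
  (@lebesgue_measure R).-integrable pos_half (fun x => (f x `^ (a * r))%:E) ->
  int0oo (fun x => escort f r x `^ a) =
    int0oo (fun x => f x `^ (a * r)) * int0oo (fun t => f t `^ r) `^ (- a).
Proof.
move=> iJ; rewrite /int0oo (funext (escort_powR f r a)).
by rewrite RintegralZr //; exact: measurable_itv.
Qed.

Lemma renyi_igf_escort f r a b :
  (@lebesgue_measure R).-integrable pos_half (fun x => (f x `^ (a * r))%:E) ->
  renyi_igf (escort f r) a b =
    (1 - a)^-1 * int0oo (fun x => f x `^ (a * r)) `^ (b - 1) /
    int0oo (fun x => f x `^ r) `^ (a * (b - 1)).
Proof.
move=> iJ; rewrite /renyi_igf int0oo_escort_powR //.
rewrite powRM ?powR_ge0 ?int0oo_powR_ge0 // -powRrM mulNr powRN.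
by rewrite mulrA.
Qed.

End EscortRenyi.

Theorem proposition2p7 (R : realType) (f : R -> R) (r alpha beta : R) :
  is_pdf0 f ->
  0 < r -> r != 1 ->
  0 < alpha -> alpha != 1 -> 0 < beta -> alpha * r != 1 ->
  (@lebesgue_measure R).-integrable pos_half (fun x => (f x `^ r)%:E) ->
  (@lebesgue_measure R).-integrable pos_half (fun x => (f x `^ (alpha * r))%:E) ->
  int0oo (fun x => f x `^ r) != 0 ->
  renyi_igf (escort f r) alpha beta =
    (1 - alpha * r) / ((1 - alpha) * (1 - r)) *
    (renyi_igf f (alpha * r) beta / renyi_igf f r (alpha * beta - alpha + 1)).
Proof.
move=> _ _ r1 _ alpha1 _ alpha_r1 _ iJ I0.
rewrite renyi_igf_escort // /renyi_igf.
have -> : alpha * beta - alpha + 1 - 1 = alpha * (beta - 1).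
  by rewrite mulrBr mulr1 addrK.
set I := int0oo (fun x => f x `^ r) in I0 *.
have Ia0 : I `^ (alpha * (beta - 1)) != 0.
  by rewrite gt_eqF // powR_gt0 // lt_def I0 int0oo_powR_ge0.
(* [field] does not finish in reasonable time on the unabstracted [powR] terms. *)
move: (I `^ _) (int0oo _ `^ _) Ia0 => Ia Jb Ia0.
have [h1 h2 h3] : [/\ 1 - alpha != 0, 1 - r != 0 & 1 - alpha * r != 0].
  by split; rewrite subr_eq0 eq_sym.
by field; rewrite h1 h2 h3 Ia0.
Qed.
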